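(* Suppose $\mathcal Q$ is vertically unbounded. Let $0\le k<\ell\le D$, let $\alpha\in\mathcal B_\ell$ be sharp and let $\beta\in\mathcal B_k$. Put $\lambda=(\beta-\alpha)/(\ell-k)\in\Gamma$ (so $-\lambda$ is the slope of the segment joining $(\ell,\alpha)$ and $(k,\beta)$). Then there exists $R\in\mathcal Q$ with $\gamma_R>\lambda$.
   Context: Let $(K,v)$ be a valued field, $\Gamma$ the divisible hull of $vK$, embedded in a divisible ordered abelian group $\Lambda$. Let $\nu\colon K[x]\to\Lambda\cup\{\infty\}$ be a valuation extending $v$ which is well-specified, i.e. it is not the case that simultaneously $\nu^{-1}(\infty)=0$, the value group of $\nu$ modulo $\Gamma$ is torsion, and the residue field of $\nu$ is algebraic over that of $v$. For $s\ge0$ let $\partial_s$ be the $s$-th Hasse–Schmidt derivative, defined by $f(x+y)=\sum_{s\ge0}(\partial_sf)y^s$. For nonconstant $f$ with $\nu(f)<\infty$ the level is $\epsilon_\nu(f)=\max\{(\nu(f)-\nu(\partial_sf))/s: s\ge1\}$; $\epsilon_\nu(a)=-\infty$ for $a\in K$. A monic $Q\in K[x]$ is a key polynomial for $\nu$ if $\epsilon_\nu(f)<\epsilon_\nu(Q)$ whenever $\deg f<\deg Q$. For monic $Q$, each $f$ has a unique $Q$-expansion $f=\sum_{i\ge0}f_{Q,i}Q^i$ with $\deg f_{Q,i}<\deg Q$; set $\nu_Q(f)=\min_i\nu(f_{Q,i}Q^i)$. Fix $m\ge1$ such that the set $\Psi_m$ of key polynomials of degree $m$ for $\nu$ is nonempty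 and has no element of maximal $\nu$-value. Let $\mathcal Q\subseteq\Psi_m$ be well-ordered by $Q<R\iff\nu(Q)<\nu(R)$ and cofinal in $\Psi_m$ for $\nu$-values; write $\gamma_Q=\nu(Q)$. As in the paper, all values $\nu_Q(f)$ ($f\ne0$) lie in $\Gamma$. $f$ is $\mathcal Q$-stable if $\nu_Q(f)=\nu(f)$ for all $Q$ in a final segment of $\mathcal Q$, $\mathcal Q$-unstable otherwise. Assume unstable polynomials exist; limit key polynomials are the monic $\mathcal Q$-unstable polynomials of minimal degree, forming $\mathrm{KP}_\infty(\mathcal Q)$. Fix $F\in\mathrm{KP}_\infty(\mathcal Q)$ and $D=\lfloor\deg F/m\rfloor$. Let $\delta^L$ be the smallest initial segment of $\Gamma$ containing $\{\nu_Q(F):Q\in\mathcal Q\}$. A cut $\eta=(\eta^L,\eta^R)$ of $\Gamma$ is vertically bounded if for every $x\in\eta^L$ and rational $q>1$ there is $y\in\eta^L$ with $q(y-x)>z-x$ for all $z\in\eta^L$; its invariance group is $\{h\in\Gamma:h+\eta^L=\eta^L\}$. Let $\gamma_{\mathcal Q}$ be the cut whose lower set is the smallest initial segment containing $\{\gamma_Q\}$; $\mathcal Q$ is vertically unbounded if $\gamma_{\mathcal Q}$ is not vertically bounded; $H$ denotes the invariance group of $\gamma_{\mathcal Q}$. For $\ell\in\{0,\dots,D\}$, $\mathcal B_\ell$ is the smallest initial segment of $\Gamma$ containing all $\beta\in\Gamma$ such that $\beta+\ell\gamma_Q\in\delta^L$ for some $Q\in\mathcal Q$. An element $\alpha\in\mathcal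 B_\ell$ is sharp if $\alpha+H$ is a final segment of $\mathcal B_\ell$, i.e. $\alpha+H\subseteq\mathcal B_\ell$ and every element of $\mathcal B_\ell$ is smaller than $\alpha+h$ for some $h\in H$. *)

From HB Require Import structures.
From mathcomp Require Import all_boot all_order all_algebra.
Set Implicit Arguments. Unset Strict Implicit. Unset Printing Implicit Defensive.
Import GRing.Theory Num.Theory.
Local Open Scope ring_scope.

(* The divisible ordered abelian group Lambda is modelled as a Q-vector space
   [L : lmodType rat] (a divisible torsion-free abelian group is uniquely a
   Q-vector space) together with a total order [le] compatible with addition.
   [None : option L] plays the role of infinity (for values) or of -infinity
   (for levels). *)

Definition ordered_group (L : lmodType rat) (le : rel L) : Prop :=
  [/\ reflexive le, antisymmetric le, transitive le, total le
    & forall x y z, le x y -> le (x + z) (y + z)].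

Definition ltL (L : lmodType rat) (le : rel L) (x y : L) : bool :=
  (x != y) && le x y.

Definition leo (L : lmodType rat) (le : rel L) (x y : option L) : bool :=
  match x, y with
  | _, None => true
  | None, Some _ => false
  | Some a, Some b => le a b
  end.
Definition lto (L : lmodType rat) (le : rel L) (x y : option L) : bool :=
  (x != y) && leo le x y.
Definition addo (L : lmodType rat) (x y : option L) : option L :=
  match x, y with Some a, Some b => Some (a + b) | _, _ => None end.
Definition mino (L : lmodType rat) (le : rel L) (x y : option L) : option L :=
  if leo le x y then x else y.

Definition is_valuation (R : comNzRingType) (L : lmodType rat) (le : rel L)
    (w : R -> option L) : Prop :=
  [/\ w 0 = None, w 1 = Some 0,
      (forall x y, w (x * y) = addo (w x) (w y))
    & (forall x y, leo le (w x) (w (x + y)) || leo le (w y) (w (x + y)))].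

Definition Gam (K : fieldType) (L : lmodType rat) (v : K -> option L) (x : L) : Prop :=
  exists n : nat, (0 < n)%N /\ exists a : K, v a = Some (x *+ n).

Definition trivial_support (K : fieldType) (L : lmodType rat)
    (nu : {poly K} -> option L) : Prop :=
  forall f, nu f = None -> f = 0.

Definition value_group_torsion (K : fieldType) (L : lmodType rat)
    (v : K -> option L) (nu : {poly K} -> option L) : Prop :=
  forall f a, nu f = Some a -> exists n : nat, (0 < n)%N /\ Gam v (a *+ n).

(* The residue field of nu is algebraic over that of v: every element of the
   residue field of nu, i.e. the class of f/g with nu g finite and
   nu f >= nu g, is a root of a nonzero polynomial with coefficients in the
   residue field of v. *)
Definition residue_algebraic (K : fieldType) (L : lmodType rat) (le : rel L)
    (v : K -> option L) (nu : {poly K} -> option L) : Prop :=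
  forall f g a, nu g = Some a -> leo le (Some a) (nu f) ->
    exists (n : nat) (c : nat -> K),
      [/\ forall i, (i <= n)%N -> leo le (Some 0) (v (c i)),
          exists2 i, (i <= n)%N & v (c i) = Some 0
        & lto le (Some (a *+ n))
             (nu (\sum_(i < n.+1) (c i)%:P * f ^+ i * g ^+ (n - i)))].

Definition well_specified (K : fieldType) (L : lmodType rat) (le : rel L)
    (v : K -> option L) (nu : {poly K} -> option L) : Prop :=
  ~ [/\ trivial_support nu, value_group_torsion v nu & residue_algebraic le v nu].

Definition maxm (L : lmodType rat) (le : rel L) (x y : option L) : option L :=
  match x, y with
  | None, _ => y
  | _, None => x
  | Some a, Some b => if le a b then Some b else Some a
  end.
Definition ltm (L : lmodType rat) (le : rel L) (x y : option L) : bool :=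
  match x, y with
  | _, None => false
  | None, Some _ => true
  | Some a, Some b => ltL le a b
  end.

(* level eps_nu(f) = max_{s>=1} (nu f - nu (d_s f)) / s, d_s the Hasse-Schmidt
   derivative (f^`N(s)); terms with nu(d_s f) = infinity (in particular all
   s > deg f) contribute -infinity.  Meaningful for nonconstant f with
   nu f < infinity; for constants it is None = -infinity. *)
Definition level (K : fieldType) (L : lmodType rat) (le : rel L)
    (nu : {poly K} -> option L) (f : {poly K}) : option L :=
  match nu f with
  | Some a => \big[maxm le/None]_(1 <= s < size f)
                 omap (fun b => (s%:R : rat)^-1 *: (a - b)) (nu (f^`N(s)))
  | None => None
  end.

Definition key_poly (K : fieldType) (L : lmodType rat) (le : rel L)
    (nu : {poly K} -> option L) (Q : {poly K}) : Prop :=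
  [/\ Q \is monic, (1 < size Q)%N, nu Q <> None
    & forall f : {poly K}, (size f < size Q)%N ->
        ((size f <= 1)%N \/ nu f <> None) ->
        ltm le (level le nu f) (level le nu Q)].

Definition qexp_coef (K : fieldType) (Q f : {poly K}) (i : nat) : {poly K} :=
  (f %/ Q ^+ i) %% Q.

Definition nuQ (K : fieldType) (L : lmodType rat) (le : rel L)
    (nu : {poly K} -> option L) (Q f : {poly K}) : option L :=
  \big[mino le/None]_(i < size f) nu (qexp_coef Q f i * Q ^+ i).

Definition good_family (K : fieldType) (L : lmodType rat) (le : rel L)
    (nu : {poly K} -> option L) (m : nat) (QQ : {poly K} -> Prop) : Prop :=
  [/\ forall Q, QQ Q -> key_poly le nu Q /\ size Q = m.+1,
      forall Q R, QQ Q -> QQ R -> nu Q = nu R -> Q = R,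
      forall S : {poly K} -> Prop, (forall Q, S Q -> QQ Q) -> (exists Q, S Q) ->
        exists Q0, S Q0 /\ forall Q, S Q -> leo le (nu Q0) (nu Q)
    & forall P, key_poly le nu P -> size P = m.+1 ->
        exists2 Q, QQ Q & leo le (nu P) (nu Q)].

Definition stable (K : fieldType) (L : lmodType rat) (le : rel L)
    (nu : {poly K} -> option L) (QQ : {poly K} -> Prop) (f : {poly K}) : Prop :=
  exists Q0, QQ Q0 /\ forall Q, QQ Q -> leo le (nu Q0) (nu Q) -> nuQ le nu Q f = nu f.

Definition limit_key_poly (K : fieldType) (L : lmodType rat) (le : rel L)
    (nu : {poly K} -> option L) (QQ : {poly K} -> Prop) (F : {poly K}) : Prop :=
  [/\ F \is monic, ~ stable le nu QQ F
    & forall f, ~ stable le nu QQ f -> (size F <= size f)%N].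

Definition vertically_bounded (L : lmodType rat) (le : rel L) (etaL : L -> Prop) : Prop :=
  forall x, etaL x -> forall q : rat, 1 < q ->
    exists y, etaL y /\ forall z, etaL z -> ltL le (z - x) (q *: (y - x)).

Definition invariance_group (K : fieldType) (L : lmodType rat)
    (v : K -> option L) (etaL : L -> Prop) (h : L) : Prop :=
  Gam v h /\ forall z, etaL (z - h) <-> etaL z.

(* lower set of gamma_QQ *)
Definition gammaQQ_L (K : fieldType) (L : lmodType rat) (le : rel L)
    (v : K -> option L) (nu : {poly K} -> option L) (QQ : {poly K} -> Prop) (x : L) : Prop :=
  Gam v x /\ exists Q g, [/\ QQ Q, nu Q = Some g & le x g].

Definition vertically_unbounded (K : fieldType) (L : lmodType rat) (le : rel L)
    (v : K -> option L) (nu : {poly K} -> option L) (QQ : {poly K} -> Prop) : Prop :=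
  ~ vertically_bounded le (gammaQQ_L le v nu QQ).

Definition H_QQ (K : fieldType) (L : lmodType rat) (le : rel L)
    (v : K -> option L) (nu : {poly K} -> option L) (QQ : {poly K} -> Prop) : L -> Prop :=
  invariance_group v (gammaQQ_L le v nu QQ).

Definition deltaL (K : fieldType) (L : lmodType rat) (le : rel L)
    (v : K -> option L) (nu : {poly K} -> option L) (QQ : {poly K} -> Prop)
    (F : {poly K}) (x : L) : Prop :=
  Gam v x /\ exists Q y, [/\ QQ Q, nuQ le nu Q F = Some y & le x y].

Definition Bset (K : fieldType) (L : lmodType rat) (le : rel L)
    (v : K -> option L) (nu : {poly K} -> option L) (QQ : {poly K} -> Prop)
    (F : {poly K}) (l : nat) (x : L) : Prop :=
  Gam v x /\ exists b Q g,
    [/\ Gam v b, QQ Q, nu Q = Some g, deltaL le v nu QQ F (b + g *+ l) & le x b].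

Definition sharp (K : fieldType) (L : lmodType rat) (le : rel L)
    (v : K -> option L) (nu : {poly K} -> option L) (QQ : {poly K} -> Prop)
    (F : {poly K}) (l : nat) (a : L) : Prop :=
  [/\ Bset le v nu QQ F l a,
      forall h, H_QQ le v nu QQ h -> Bset le v nu QQ F l (a + h)
    & forall b, Bset le v nu QQ F l b ->
        exists h, H_QQ le v nu QQ h /\ ltL le b (a + h)].

From HB Require Import structures.
From mathcomp Require Import all_boot all_order all_algebra.
Import GRing.Theory Num.Theory.
Local Open Scope ring_scope.
Set Implicit Arguments. Unset Strict Implicit.

(* Write n = l - k. From beta in B_k pick b >= beta, Q in QQ with value g in
   Gamma and b + k g in delta^L; then b - n g lies in B_l.  Sharpness of alpha
   gives h in H with b - n g < alpha + h, so beta - alpha < n g + h.  Either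
   h <= 0, or g + h lies in the lower cut of gamma_QQ by H-invariance; in both
   cases some R in QQ has gamma_R >= g, g + h, hence n g + h <= n gamma_R and
   lambda < gamma_R. *)

Section OrderedGroup.
Variables (L : lmodType rat) (le : rel L).
Hypothesis hle : ordered_group le.

Lemma leL_add x y u w : le x y -> le u w -> le (x + u) (y + w).
Proof.
case: hle => _ _ le_trans _ le_add2r lexy leuw.
apply: (le_trans (y + u)); first exact: le_add2r.
by rewrite addrC [y + w]addrC; apply: le_add2r.
Qed.

Lemma leL_muln2 x y n : le x y -> le (x *+ n) (y *+ n).
Proof.
move=> lexy; elim: n => [|n IHn]; first by rewrite !mulr0n; case: hle.
by rewrite !mulrS; apply: leL_add.
Qed.

Lemma ltL_leL_trans x y z : ltL le x y -> le y z -> ltL le x z.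
Proof.
case: hle => _ le_anti le_trans _ _ /andP [nexy lexy] leyz.
apply/andP; split; last exact: le_trans leyz.
apply: contra nexy => /eqP exz; move: leyz; rewrite -exz => leyx.
by apply/eqP/le_anti; rewrite lexy leyx.
Qed.

Lemma leL_ltL_trans x y z : le x y -> ltL le y z -> ltL le x z.
Proof.
case: hle => _ le_anti le_trans _ _ lexy /andP [neyz leyz].
apply/andP; split; last exact: le_trans leyz.
apply: contra neyz => /eqP exz; move: lexy; rewrite exz => lezy.
by apply/eqP/le_anti; rewrite leyz lezy.
Qed.

Lemma ltL_add2r x y z : ltL le x y -> ltL le (x + z) (y + z).
Proof.
case: hle => _ _ _ _ le_add2r /andP [nexy lexy].
by apply/andP; split; [apply: contra nexy => /eqP /addIr -> | exact: le_add2r].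
Qed.

Lemma ltL_muln2_inv x y n : ltL le (x *+ n) (y *+ n) -> ltL le x y.
Proof.
case: hle => _ le_anti _ le_total _ /andP [nexyn lexyn].
have nexy : x != y by apply: contra nexyn => /eqP ->.
rewrite /ltL nexy /=; case/orP: (le_total x y) => // leyx.
case/eqP: nexyn; apply: le_anti; rewrite lexyn /=.
exact: leL_muln2.
Qed.

Lemma ltL_divn x y n : (0 < n)%N ->
  ltL le x (y *+ n) -> ltL le ((n%:R^-1 : rat) *: x) y.
Proof.
move=> n_gt0 ltxy; apply: (@ltL_muln2_inv _ _ n).
by rewrite -scaler_nat scalerA mulfV ?scale1r // pnatr_eq0 -lt0n.
Qed.

End OrderedGroup.

Section DivisibleHull.
Variables (K : fieldType) (L : lmodType rat) (le : rel L) (v : K -> option L).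
Hypothesis hv : is_valuation le v.

Lemma valuation_exp a s j : v a = Some s -> v (a ^+ j) = Some (s *+ j).
Proof.
case: hv => _ v1 vM _ va; elim: j => [|j IHj]; first by rewrite expr0 mulr0n.
by rewrite exprS vM va IHj /= mulrS.
Qed.

Lemma Gam_add x y : Gam v x -> Gam v y -> Gam v (x + y).
Proof.
case: hv => _ _ vM _ [n [n_gt0 [a va]]] [m [m_gt0 [b vb]]].
exists (n * m)%N; split; first by rewrite muln_gt0 n_gt0.
exists (a ^+ m * b ^+ n); rewrite vM (valuation_exp m va) (valuation_exp n vb) /=.
by rewrite mulrnDl -!mulrnA mulnC.
Qed.

Lemma Gam_opp x : Gam v x -> Gam v (- x).
Proof.
case: hv => v0 v1 vM _ [n [n_gt0 [a va]]]; exists n; split => //.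
have a_neq0 : a != 0 by apply/eqP => a0; move: va; rewrite a0 v0.
exists a^-1; have := vM a a^-1; rewrite mulfV // v1 va.
case: (v a^-1) => //= y [] xy0; congr Some.
by rewrite mulNrn; apply/eqP; rewrite -addr_eq0 addrC xy0.
Qed.

Lemma Gam_sub x y : Gam v x -> Gam v y -> Gam v (x - y).
Proof. by move=> Gx Gy; apply: Gam_add => //; apply: Gam_opp. Qed.

Lemma Gam_muln x j : Gam v x -> Gam v (x *+ j).
Proof.
move=> [n [n_gt0 [a va]]]; exists n; split => //; exists (a ^+ j).
by rewrite (valuation_exp j va) -!mulrnA mulnC.
Qed.

Lemma Gam_divn x j : (0 < j)%N -> Gam v (x *+ j) -> Gam v x.
Proof.
move=> j_gt0 [n [n_gt0 [a va]]]; exists (j * n)%N; split.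
  by rewrite muln_gt0 j_gt0.
by exists a; rewrite va mulrnA.
Qed.

End DivisibleHull.

Section Family.
Variables (K : fieldType) (L : lmodType rat) (le : rel L).
Hypothesis hle : ordered_group le.
Variables (v : K -> option L) (nu : {poly K} -> option L).
Hypothesis hv : is_valuation le v.
Variables (QQ : {poly K} -> Prop) (F : {poly K}).

Lemma Bset_witness_Gam j x : Bset le v nu QQ F j x -> (0 < j)%N ->
  exists b Q g, [/\ QQ Q, nu Q = Some g, Gam v g,
    deltaL le v nu QQ F (b + g *+ j) & le x b].
Proof.
move=> [_ [b [Q [g [Gb QQ_Q nuQ [Gbg dl] lexb]]]]] j_gt0.
exists b, Q, g; split => //.
by apply: (Gam_divn j_gt0); have := Gam_sub hv Gbg Gb; rewrite addrC addKr.
Qed.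

Lemma Bset_sub_value k l b Q g : (k <= l)%N ->
  QQ Q -> nu Q = Some g -> Gam v g ->
  deltaL le v nu QQ F (b + g *+ k) -> Bset le v nu QQ F l (b - g *+ (l - k)).
Proof.
move=> le_kl QQ_Q nuQ Gg dl.
have Gb : Gam v b.
  by have := Gam_sub hv dl.1 (Gam_muln hv k Gg); rewrite addrK.
have Gb' : Gam v (b - g *+ (l - k)) := Gam_sub hv Gb (Gam_muln hv _ Gg).
split => //; exists (b - g *+ (l - k)), Q, g; split => //; last by case: hle.
by rewrite -{2}(subnKC le_kl) mulrnDr addrCA subrK addrC.
Qed.

Lemma QQ_value_above_shift h Q g : H_QQ le v nu QQ h ->
  QQ Q -> nu Q = Some g -> Gam v g ->
  exists R gR, [/\ QQ R, nu R = Some gR, le (g + h) gR & le g gR].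
Proof.
case: hle => le_refl _ le_trans le_total le_add2r [_ h_inv] QQ_Q nuQ Gg.
case/orP: (le_total 0 h) => [h_ge0 | h_le0].
  have : gammaQQ_L le v nu QQ (g + h).
    by apply/h_inv; rewrite addrK; split => //; exists Q, g.
  case=> _ [R [gR [QQ_R nuR le_ghR]]]; exists R, gR; split => //.
  by apply: le_trans le_ghR; have := le_add2r _ _ g h_ge0; rewrite add0r addrC.
exists Q, g; split => //.
by have := le_add2r _ _ g h_le0; rewrite add0r addrC.
Qed.

End Family.

Theorem mainTheorem12
  (K : fieldType) (L : lmodType rat) (le : rel L) (hle : ordered_group le)
  (v : K -> option L) (hv : is_valuation le v)
  (nu : {poly K} -> option L) (hnu : is_valuation le nu)
  (hext : forall c : K, nu c%:P = v c)
  (hws : well_specified le v nu)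
  (m : nat) (hm : (0 < m)%N)
  (hPsi : exists P, key_poly le nu P /\ size P = m.+1)
  (hnomax : forall P, key_poly le nu P -> size P = m.+1 ->
     exists P', [/\ key_poly le nu P', size P' = m.+1 & lto le (nu P) (nu P')])
  (QQ : {poly K} -> Prop) (hQQ : good_family le nu m QQ)
  (hunst : exists f, ~ stable le nu QQ f)
  (F : {poly K}) (hF : limit_key_poly le nu QQ F)
  (hvu : vertically_unbounded le v nu QQ)
  (k l : nat) (hkl : (k < l)%N) (hlD : (l <= (size F).-1 %/ m)%N)
  (alpha : L) (halpha : sharp le v nu QQ F l alpha)
  (beta : L) (hbeta : Bset le v nu QQ F k beta) :
  exists R g, [/\ QQ R, nu R = Some g
    & ltL le (((l - k)%N%:R : rat)^-1 *: (beta - alpha)) g].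
Proof.
case: halpha => Balpha _ alpha_sharp.
have l_gt0 : (0 < l)%N by apply: leq_ltn_trans hkl.
have [b [Q [g [QQ_Q nuQ Gg dl le_beta_b]]]] : exists b Q g,
    [/\ QQ Q, nu Q = Some g, Gam v g,
        deltaL le v nu QQ F (b + g *+ k) & le beta b].
  have [k0 | k_gt0] := posnP k; last exact: Bset_witness_Gam.
  case: hbeta => _ [b [_ [g0 [_ _ _ dl le_beta_b]]]].
  have [_ [Q [g [QQ_Q nuQ Gg _ _]]]] := Bset_witness_Gam hv Balpha l_gt0.
  by exists b, Q, g; rewrite k0 !mulr0n in dl *.
have [h [Hh lt_alpha_h]] :=
  alpha_sharp _ (Bset_sub_value hle hv (ltnW hkl) QQ_Q nuQ Gg dl).
have [R [gR [QQ_R nuR le_ghR le_gR]]] := QQ_value_above_shift hle Hh QQ_Q nuQ Gg.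
exists R, gR; split => //; apply: (ltL_divn hle); first by rewrite subn_gt0.
have le_sum : le (g *+ (l - k) + h) (gR *+ (l - k)).
  rewrite -(prednK (_ : 0 < l - k)%N) ?subn_gt0 // !mulrS addrAC.
  by apply: (leL_add hle le_ghR); apply: leL_muln2.
have le_beta_alpha : le (beta - alpha) (b - alpha).
  by case: hle => _ _ _ _ le_add2r; apply: le_add2r.
apply: (leL_ltL_trans hle le_beta_alpha); apply: (ltL_leL_trans hle _ le_sum).
have := ltL_add2r hle (g *+ (l - k) - alpha) lt_alpha_h.
by rewrite addrA subrK [X in ltL _ _ X]addrC addrA subrK.
Qed.
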